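(* Let $n\ge 1$ and let $G_1=(s_1,\dots,s_{2n})$ and $G_2=(t_1,\dots,t_{2n})$ be ordered Gauss codes of alternating OGC knot diagrams with $n$ crossings, whose first halves are both equal to $(1,-2,3,-4,\dots,(-1)^{n+1}n)$. Let $G_1'=(s_{n+1},\dots,s_{2n})$ and $G_2'=(t_{n+1},\dots,t_{2n})$ be their second halves, and define the product as the concatenation $P=(s_{n+1},\dots,s_{2n},-t_{n+1},\dots,-t_{2n})$. Then $P$ can be transformed into an ordered Gauss code, i.e., the absolute values of the first $n$ entries of $P$ are $n$ distinct elements of $\{1,\dots,n\}$, so that after relabelling the crossings (applying a permutation of $\{1,\dots,n\}$ to absolute values, keeping signs) $P$ becomes a sequence of length $2n$ whose first $n$ entries have absolute values $1,2,\dots,n$ in order.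
   Context: A Gauss code of a knot diagram with $n$ crossings is a sequence of $2n$ nonzero integers obtained by choosing a base point and orientation, labelling the crossings by $1,\dots,n$, and recording the labels of the crossings met along the traversal, with sign indicating over- or under-passage; each label appears exactly twice, once with each sign. A Gauss code is ordered if the absolute values of its first $n$ entries are $1,2,\dots,n$ in this order. An OGC diagram is a knot diagram admitting an ordered Gauss code. *)

From mathcomp Require Import all_boot all_order all_algebra.
Set Implicit Arguments. Unset Strict Implicit. Unset Printing Implicit Defensive.
Import Order.TTheory GRing.Theory Num.Theory.
Local Open Scope ring_scope.

(* Combinatorial Gauss code with n crossings: a sequence of length 2n of
   integers, every entry has absolute value in {1,..,n}, and each label
   k in {1,..,n} appears exactly twice, once as +k (over) and once as -k
   (under). *)
Definition gauss_code (n : nat) (s : seq int) : Prop :=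
  [/\ size s = (2 * n)%N,
      all (fun x : int => (0 < `|x|)%N && (`|x| <= n)%N) s &
      forall k : nat, (0 < k <= n)%N ->
        count_mem (k%:Z) s = 1%N /\ count_mem (- k%:Z) s = 1%N].

Definition ordered_code (n : nat) (s : seq int) : Prop :=
  forall i : nat, (i < n)%N -> absz (nth 0 s i) = i.+1.

Definition alternating_code (s : seq int) : Prop :=
  forall i : nat, (i < size s)%N ->
    (0 < nth 0 s i) != (0 < nth 0 s ((i.+1) %% size s)).

Definition std_first_half (n : nat) : seq int :=
  [seq ((-1) ^+ i * (i.+1)%:Z) | i <- iota 0 n].

Definition relabel (sigma : nat -> nat) (s : seq int) : seq int :=
  [seq (if 0 <= x then (sigma `|x|%N)%:Z else - (sigma `|x|%N)%:Z) | x <- s].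

Definition is_relabelling (n : nat) (sigma : nat -> nat) : Prop :=
  (forall k : nat, (0 < k <= n)%N -> (0 < sigma k <= n)%N) /\
  (forall k l : nat, (0 < k <= n)%N -> (0 < l <= n)%N -> sigma k = sigma l -> k = l).

Definition gauss_product (n : nat) (G1 G2 : seq int) : seq int :=
  drop n G1 ++ [seq - x | x <- drop n G2].

From mathcomp Require Import all_boot all_order all_algebra.
From mathcomp Require Import zify.
Set Implicit Arguments. Unset Strict Implicit. Unset Printing Implicit Defensive.
Import Order.TTheory GRing.Theory Num.Theory.
Local Open Scope ring_scope.

(** The first half [(1, -2, 3, ...)] meets every crossing exactly once, so
   in each code the second half also meets every crossing exactly once: its
   absolute values are a permutation of [1..n].  Hence so are those of the
   first half of the product, and renumbering the crossings in their order of
   appearance makes the product ordered.  For a label [k], the product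
   contains [k] as often as the two second halves together contain [k] and
   [-k], i.e. [(1 - #k) + (1 - #-k) = 1] times where [#] counts in the common
   first half; relabelling by a permutation preserves this. *)

Definition relabel1 (sigma : nat -> nat) (x : int) : int :=
  if 0 <= x then (sigma `|x|%N)%:Z else - (sigma `|x|%N)%:Z.

Lemma relabelE sigma s : relabel sigma s = map (relabel1 sigma) s.
Proof. by []. Qed.

Lemma absz_relabel1 sigma x : `|relabel1 sigma x|%N = sigma `|x|%N.
Proof. by rewrite /relabel1; case: ifP; rewrite ?abszN. Qed.

Lemma count_absz (s : seq int) k : (0 < k)%N ->
  count_mem k (map absz s) = (count_mem k%:Z s + count_mem (- k%:Z) s)%N.
Proof.
move=> k_gt0; rewrite count_map -count_predUI.
have -> : count (predI (pred1 k%:Z) (pred1 (- k%:Z))) s = 0%N.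
  by apply/eqP; rewrite -leqn0 -(count_pred0 s) sub_count // => x /andP[/eqP-> /eqP]; lia.
rewrite addn0; apply: eq_count => x /=.
apply/eqP/orP; last by case=> /eqP->; rewrite ?abszN.
by case: x => m /=; [move=> ->; left | move=> <-; right].
Qed.

Lemma count_mem_iota1 n k :
  count_mem k (iota 1 n) = ((0 < k <= n)%N : nat).
Proof. by rewrite count_uniq_mem ?iota_uniq // mem_iota; congr nat_of_bool; lia. Qed.

Lemma map_absz_std_first_half n : map absz (std_first_half n) = iota 1 n.
Proof.
rewrite /std_first_half -map_comp (iotaDl 1 0); apply: eq_map => i /=.
by rewrite abszM abszX abszN exp1n mul1n.
Qed.

Lemma count_mem_opp (s : seq int) y :
  count_mem y [seq - x | x <- s] = count_mem (- y : int) s.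
Proof. by rewrite count_map; apply: eq_count => x /=; rewrite eqr_oppLR. Qed.

Lemma count_take_drop (T : eqType) n (s : seq T) y :
  count_mem y s = (count_mem y (take n s) + count_mem y (drop n s))%N.
Proof. by rewrite -count_cat cat_take_drop. Qed.

Section GaussCode.

Variable n : nat.

Lemma gauss_code_size G : gauss_code n G -> size G = (2 * n)%N.
Proof. by case. Qed.

Lemma gauss_code_range G x : gauss_code n G -> x \in G -> (0 < `|x| <= n)%N.
Proof. by case=> _ /allP range _ /range. Qed.

Lemma count_absz_gauss_code G k : gauss_code n G ->
  count_mem k (map absz G) = (count_mem k (iota 1 n)).*2.
Proof.
move=> gG; rewrite count_mem_iota1; case: (boolP (0 < k <= n)%N) => [k_in | k_out].
  case: gG => _ _ /(_ k k_in)[c1 c2].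
  by rewrite count_absz ?c1 ?c2 //; case/andP: k_in.
apply/count_memPn/mapP => -[x /(gauss_code_range gG) x_in k_eq].
by rewrite k_eq x_in in k_out.
Qed.

Lemma perm_absz_drop G : gauss_code n G ->
  perm_eq (map absz (take n G)) (iota 1 n) ->
  perm_eq (map absz (drop n G)) (iota 1 n).
Proof.
move=> gG /permP take_perm; apply/allP => k _; apply/eqP.
have := count_absz_gauss_code k gG.
by rewrite -{1}(cat_take_drop n G) map_cat count_cat take_perm; lia.
Qed.

Lemma gauss_code_product G1 G2 F :
  gauss_code n G1 -> gauss_code n G2 -> take n G1 = F -> take n G2 = F ->
  perm_eq (map absz F) (iota 1 n) -> gauss_code n (gauss_product n G1 G2).
Proof.
move=> g1 g2 t1 t2 hF; split.
- by rewrite size_cat size_map !size_drop !gauss_code_size //; lia.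
- apply/allP => x; rewrite mem_cat => /orP[/mem_drop/(gauss_code_range g1) //|].
  by case/mapP=> y /mem_drop/(gauss_code_range g2) + ->; rewrite abszN.
move=> k k_in; rewrite !count_cat !count_mem_opp opprK.
have F_k : (count_mem k%:Z F + count_mem (- k%:Z : int) F = 1)%N.
  by rewrite -count_absz ?(permP hF) ?count_mem_iota1 ?k_in //; case/andP: k_in.
case: g1 => _ _ /(_ k k_in)[]; case: g2 => _ _ /(_ k k_in)[].
move: F_k; rewrite !(count_take_drop n G1) !(count_take_drop n G2) t1 t2.
(* The counts carry syntactically different eqType instances of [int], which
   [lia] would take for distinct atoms; [set] identifies them. *)
set Fp := count_mem k%:Z F; set Fn := count_mem (- k%:Z) F.
set D1p := count_mem k%:Z (drop n G1); set D1n := count_mem (- k%:Z) (drop n G1).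
set D2p := count_mem k%:Z (drop n G2); set D2n := count_mem (- k%:Z) (drop n G2).
lia.
Qed.

Lemma relabelling_surj sigma k : is_relabelling n sigma -> (0 < k <= n)%N ->
  exists2 l, (0 < l <= n)%N & sigma l = k.
Proof.
move=> [sigma_range sigma_inj] k_in.
have in_iota l : (l \in iota 1 n) = (0 < l <= n)%N by rewrite mem_iota; lia.
have sub : {subset map sigma (iota 1 n) <= iota 1 n}.
  by move=> _ /mapP[l l_in ->]; rewrite in_iota sigma_range -?in_iota.
have uniq_img : uniq (map sigma (iota 1 n)).
  by rewrite map_inj_in_uniq ?iota_uniq // => l m; rewrite !in_iota; apply: sigma_inj.
have [|_ img_eq] := uniq_min_size uniq_img sub; first by rewrite size_map.
have /mapP[l l_in ->] : k \in map sigma (iota 1 n) by rewrite img_eq in_iota.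
by exists l; rewrite -?in_iota.
Qed.

Lemma relabel1_inj sigma : is_relabelling n sigma ->
  {in [pred x : int | 0 < `|x| <= n]%N &, injective (relabel1 sigma)}.
Proof.
move=> [sigma_range sigma_inj] x y x_in y_in rel_eq.
have abs_eq : `|x|%N = `|y|%N by apply: sigma_inj; rewrite -?absz_relabel1 ?rel_eq.
have sign x' : (0 < sigma `|x'|)%N -> (0 <= relabel1 sigma x') = (0 <= x').
  by rewrite /relabel1; case: ifP => // _; rewrite oppr_ge0 lez_nat; lia.
have sign_eq : (0 <= x) = (0 <= y).
  have /andP[x_pos _] := sigma_range _ x_in; have /andP[y_pos _] := sigma_range _ y_in.
  by rewrite -(sign x x_pos) -(sign y y_pos) rel_eq.
by rewrite (intEsign x) (intEsign y) !ltNge sign_eq abs_eq.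
Qed.

Lemma gauss_code_relabel sigma s : is_relabelling n sigma ->
  gauss_code n s -> gauss_code n (relabel sigma s).
Proof.
move=> rel gs; rewrite relabelE; split.
- by rewrite size_map gauss_code_size.
- apply/allP => _ /mapP[x /(gauss_code_range gs) x_in ->].
  by rewrite absz_relabel1; apply: rel.1.
move=> k /(relabelling_surj rel)[l l_in <-].
have count_relabel y : (0 < `|y| <= n)%N ->
    count_mem (relabel1 sigma y) (map (relabel1 sigma) s) = count_mem y s.
  move=> y_in; rewrite count_map; apply: eq_in_count => x /(gauss_code_range gs) x_in /=.
  exact: (inj_in_eq (relabel1_inj rel)).
have pos : relabel1 sigma l%:Z = (sigma l)%:Z by [].
have neg : relabel1 sigma (- l%:Z) = - (sigma l)%:Z.
  by rewrite /relabel1 abszN oppr_ge0 lez_nat; case: ifP => //; lia.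
by rewrite -pos -neg !count_relabel ?abszN //; case: gs => _ _ /(_ l l_in).
Qed.

Lemma take_gauss_product G1 G2 : gauss_code n G1 ->
  take n (gauss_product n G1 G2) = drop n G1.
Proof.
move=> g1; have size_drop1 : size (drop n G1) = n.
  by rewrite size_drop gauss_code_size //; lia.
by rewrite take_cat size_drop1 ltnn subnn take0 cats0.
Qed.

End GaussCode.

Lemma is_relabelling_index n (a : seq nat) : perm_eq a (iota 1 n) ->
  is_relabelling n (fun k => (index k a).+1).
Proof.
move=> a_perm; have mem_a k : (k \in a) = (0 < k <= n)%N.
  by rewrite (perm_mem a_perm) mem_iota; lia.
split=> [k | k l].
  by rewrite -(mem_a k) => k_in; rewrite /= -(size_iota 1 n) -(perm_size a_perm) index_mem.
rewrite -(mem_a k) -(mem_a l).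
by move=> k_in l_in [idx_eq]; rewrite -(nth_index 0 k_in) idx_eq nth_index.
Qed.

Lemma ordered_code_relabel_index n (s : seq int) :
  (n <= size s)%N -> uniq (map absz (take n s)) ->
  ordered_code n (relabel (fun k => (index k (map absz (take n s))).+1) s).
Proof.
move=> size_s a_uniq i lt_in.
have size_take_s : size (take n s) = n by rewrite size_takel.
rewrite relabelE (nth_map 0) ?absz_relabel1; last by apply: leq_trans size_s.
by rewrite -(nth_take 0 lt_in) -(nth_map 0 0%N) ?index_uniq ?size_map ?size_take_s.
Qed.

Theorem theorem4 (n : nat) (G1 G2 : seq int) :
  (1 <= n)%N ->
  gauss_code n G1 -> alternating_code G1 -> take n G1 = std_first_half n ->
  gauss_code n G2 -> alternating_code G2 -> take n G2 = std_first_half n ->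
  let P := gauss_product n G1 G2 in
  [/\ uniq [seq `|x|%N | x <- take n P],
      all (fun x : int => (0 < `|x|)%N && (`|x| <= n)%N) (take n P) &
      exists sigma : nat -> nat,
        [/\ is_relabelling n sigma,
            gauss_code n (relabel sigma P) &
            ordered_code n (relabel sigma P)]].
Proof.
move=> _ g1 _ t1 g2 _ t2 P.
have std_perm : perm_eq (map absz (std_first_half n)) (iota 1 n).
  by rewrite map_absz_std_first_half.
have gP : gauss_code n P := gauss_code_product g1 g2 t1 t2 std_perm.
have head_perm : perm_eq (map absz (take n P)) (iota 1 n).
  by rewrite take_gauss_product //; apply: perm_absz_drop; rewrite ?t1.
have head_uniq : uniq (map absz (take n P)) by rewrite (perm_uniq head_perm) iota_uniq.
split=> //; first by apply/allP => x /mem_take /(gauss_code_range gP).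
exists (fun k => (index k (map absz (take n P))).+1); split.
- exact: is_relabelling_index.
- exact: gauss_code_relabel (is_relabelling_index head_perm) gP.
- by apply: ordered_code_relabel_index; rewrite // (gauss_code_size gP); lia.
Qed.
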